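(* Let $\alpha \in [0,1)$ and let $R$ be a total preorder on $\Omega$ such that $\mathcal{F}(\Omega(\mathbf{x}, R), \alpha)$ is nonempty for every $\mathbf{x} \in \Omega$. Then the pessimal bound $B_R^*$ is consistent with $R$.
   Context: Fix integers $m \ge 2$, $n \ge 1$ and reals $S_{\min} < S_{\max}$; $S = \{S_0,\dots,S_{m-1}\}$ with $S_k = S_{\min} + k\frac{S_{\max}-S_{\min}}{m-1}$. $\mathcal{F}$ is the set of probability distributions on $S$, identified with the probability simplex in $\mathbb{R}^m$ with the Euclidean topology; $E[F]$ is the mean. $\Omega$ is the set of samples of size $n$ from $S$, identified with their sorted versions $x_{(1)} \le \dots \le x_{(n)}$. $P_F[\Omega']$ is the probability that the sorted sample of $n$ i.i.d. draws from $F$ lies in $\Omega' \subseteq \Omega$. $\mathcal{G}(\Omega',\alpha) = \{F : P_F[\Omega'] > \alpha\}$ and $\mathcal{F}(\Omega',\alpha)$ is its closure. A total preorder $R$ on $\Omega$ is a reflexive transitive total relation $\lesssim_R$; $\mathbf{x} \sim_R \mathbf{y}$ means both $\mathbf{x}\lesssim_R\mathbf{y}$ and $\mathbf{y}\lesssim_R\mathbf{x}$, and $\mathbf{x} <_R \mathbf{y}$ means $\mathbf{x}\lesssim_R\mathbf{y}$ but not $\mathbf{x}\sim_R\mathbf{y}$; a total order is a total preorder whose equivalence classes are singletons. The upper set is $\Omega(\mathbf{x}, R) = \{\mathbf{y} \in \Omega : \mathbf{x} \lesssim_R \mathbf{y}\}$. The pessimal bound is $B_R^*(\mathbf{x}) =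 \min\{E[F] : F \in \mathcal{F}(\Omega(\mathbf{x},R),\alpha)\}$. A bound $B:\Omega\to\mathbb{R}$ is consistent with a total order $T$ if $\mathbf{x} \le_T \mathbf{y}$ implies $B(\mathbf{x}) \le B(\mathbf{y})$; a total order $T$ agrees with $R$ if $\mathbf{x} <_R \mathbf{y}$ implies $\mathbf{x} <_T \mathbf{y}$; $B$ is consistent with $R$ if it is consistent with every total order agreeing with $R$. *)

From HB Require Import structures.
From mathcomp Require Import all_boot all_order all_algebra.
From mathcomp Require Import all_classical all_reals all_analysis.
Set Implicit Arguments. Unset Strict Implicit. Unset Printing Implicit Defensive.
Import Order.TTheory GRing.Theory Num.Theory.
Import numFieldNormedType.Exports.
Local Open Scope classical_set_scope.
Local Open Scope ring_scope.

Definition Spt (R : realType) (m : nat) (Smin Smax : R) (k : 'I_m) : R :=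
  Smin + k%:R * ((Smax - Smin) / (m.-1)%:R).

(* Omega: sorted samples of size n, values given by indices in 'I_m *)
Definition Omega (n m : nat) :=
  {t : n.-tuple 'I_m | sorted (fun i j : 'I_m => (i <= j)%N) t}.

Definition simplex (R : realType) (m : nat) : set 'rV[R]_m :=
  [set F | (forall k, 0 <= F 0 k) /\ \sum_(k < m) F 0 k = 1].

Definition mean (R : realType) (m : nat) (Smin Smax : R) (F : 'rV[R]_m) : R :=
  \sum_(k < m) F 0 k * Spt Smin Smax k.

(* P_F[Om']: probability that the sorted version of n i.i.d. draws from F
   lies in Om' (sorted version of t = the element of Omega that is a
   permutation of t). *)
Definition prob (R : realType) (n m : nat) (F : 'rV[R]_m) (Om' : {set Omega n m}) : R :=
  \sum_(t : n.-tuple 'I_m | [exists w in Om', perm_eq (val w) t])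
     \prod_(i < n) F 0 (tnth t i).

Definition Gset (R : realType) (n m : nat) (Om' : {set Omega n m}) (alpha : R)
  : set 'rV[R]_m := [set F | @simplex R m F /\ alpha < prob F Om'].

Definition Fset (R : realType) (n m : nat) (Om' : {set Omega n m}) (alpha : R)
  : set 'rV[R]_m := closure (Gset Om' alpha).

Definition upper (T : finType) (le : rel T) (x : T) : {set T} :=
  [set y | le x y].

(* Pessimal bound; the minimum of E[F] over Fset (it exists whenever Fset
   is nonempty since Fset is compact), written as the infimum. *)
Definition Bstar (R : realType) (n m : nat) (Smin Smax alpha : R)
  (le : rel (Omega n m)) (x : Omega n m) : R :=
  inf [set mean Smin Smax F | F in Fset (upper le x) alpha].

Definition total_preorder (T : Type) (le : rel T) : Prop :=
  reflexive le /\ transitive le /\ (forall x y, le x y \/ le y x).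

Definition total_order (T : Type) (le : rel T) : Prop :=
  total_preorder le /\ (forall x y, le x y -> le y x -> x = y).

Definition strict (T : Type) (le : rel T) (x y : T) : Prop :=
  le x y /\ ~ le y x.

Definition agrees (T : Type) (leT leR : rel T) : Prop :=
  forall x y, strict leR x y -> strict leT x y.

Definition consistent_with_order (T : Type) (R : realType) (B : T -> R) (leT : rel T) : Prop :=
  forall x y, leT x y -> B x <= B y.

Definition consistent (T : Type) (R : realType) (B : T -> R) (leR : rel T) : Prop :=
  forall leT : rel T, total_order leT -> agrees leT leR -> consistent_with_order B leT.

(* Going up in R shrinks the upper set, hence the event whose probability
   must exceed alpha, hence the feasible set F(Omega(x,R), alpha) of
   distributions, so the minimal mean B*_R can only grow (the infimum is
   meaningful since feasible sets lie in the unit cube, where the mean is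
   bounded below). A total order agreeing with R never reverses R, so B*_R
   is monotone along it too. *)

From HB Require Import structures.
From mathcomp Require Import all_boot all_order all_algebra.
From mathcomp Require Import all_classical all_reals all_analysis.
Import Order.TTheory GRing.Theory Num.Theory.
Import numFieldTopology.Exports numFieldNormedType.Exports.
Local Open Scope classical_set_scope.
Local Open Scope ring_scope.

Lemma le_inf_subset (R : realType) (A B : set R) :
  A `<=` B -> A !=set0 -> has_lbound B -> inf B <= inf A.
Proof.
by move=> AB A0 /ge_inf infB; apply: lb_le_inf => // a /AB; apply: infB.
Qed.

Lemma agrees_le (T : Type) (leT leR : rel T) x y :
  (forall x y, leR x y \/ leR y x) -> agrees leT leR -> leT x y -> leR x y.
Proof.
move=> totR agr lexy; case Rxy: (leR x y) => //.
have nRxy : ~ leR x y by rewrite Rxy.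
have [/nRxy //|Ryx] := totR x y.
by have [_] := agr y x (conj Ryx nRxy).
Qed.

Lemma upper_trans (T : finType) (le : rel T) x y :
  transitive le -> le x y -> upper le y \subset upper le x.
Proof.
move=> tr_le lexy; apply/fintype.subsetP => z.
by rewrite !inE; apply: tr_le.
Qed.

Section Feasible.
Variables (R : realType) (m n : nat).

Lemma probS (F : 'rV[R]_m) (A B : {set Omega n m}) :
  (forall k, 0 <= F 0 k) -> A \subset B -> prob F A <= prob F B.
Proof.
move=> F0 /fintype.subsetP AB; rewrite /prob [leLHS]big_mkcond [leRHS]big_mkcond /=.
apply: ler_sum => t _.
have P0 : 0 <= \prod_(i < n) F 0 (tnth t i) by apply: prodr_ge0.
case: ifP => [/existsP [w /andP [wA pw]]|_]; last by case: ifP.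
by rewrite ifT //; apply/existsP; exists w; rewrite pw (AB _ wA).
Qed.

Lemma FsetS (A B : {set Omega n m}) (alpha : R) :
  A \subset B -> Fset A alpha `<=` Fset B alpha.
Proof.
move=> AB; apply: closureS => F [sF pF]; split => //.
by apply: (lt_le_trans pF); apply: probS AB; case: sF.
Qed.

Definition unit_cube : set 'rV[R]_m := [set F | forall k, 0 <= F 0 k <= 1].

Lemma closed_unit_cube : closed unit_cube.
Proof.
have -> : unit_cube = \bigcap_(k in [set: 'I_m])
    ((fun F : 'rV[R]_m => F 0 k) @^-1` ([set x | 0 <= x] `&` [set x | x <= 1])).
  apply/seteqP; split => F /=; first by move=> F01 k _; have /andP[] := F01 k.
  by move=> F01 k; have [/= -> ->] := F01 k I.
apply: closed_bigI => k _; apply: preimage_closed.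
  by move=> F _; apply: coord_continuous.
by apply: closedI; [apply: closed_ge | apply: closed_le].
Qed.

Lemma simplex_unit_cube : @simplex R m `<=` unit_cube.
Proof.
move=> F [F0 F1] k; rewrite F0 -F1 (bigD1 k) //= lerDl.
by apply: sumr_ge0 => i _; apply: F0.
Qed.

Lemma Fset_unit_cube (A : {set Omega n m}) (alpha : R) :
  Fset A alpha `<=` unit_cube.
Proof.
rewrite /Fset ((closure_id unit_cube).1 closed_unit_cube).
by apply: closureS => F [/simplex_unit_cube].
Qed.

Lemma mean_ge_unit_cube (Smin Smax : R) (F : 'rV[R]_m) :
  unit_cube F -> - \sum_(k < m) `|Spt Smin Smax k| <= mean Smin Smax F.
Proof.
move=> F01; rewrite /mean -sumrN; apply: ler_sum => k _.
have /andP[F0 F1] := F01 k.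
rewrite lerNl; apply: le_trans (ler_norm _) _.
by rewrite normrN normrM ger0_norm //; apply: ler_piMl.
Qed.

Lemma Bstar_le (Smin Smax alpha : R) (le : rel (Omega n m)) x y :
  transitive le -> Fset (upper le y) alpha !=set0 -> le x y ->
  Bstar Smin Smax alpha le x <= Bstar Smin Smax alpha le y.
Proof.
move=> tr_le [F FF] lexy; apply: le_inf_subset.
- apply: image_subset; exact/FsetS/upper_trans.
- by exists (mean Smin Smax F), F.
exists (- \sum_(k < m) `|Spt Smin Smax k|) => _ [G /Fset_unit_cube G01 <-].
exact: mean_ge_unit_cube.
Qed.

End Feasible.

Theorem lemma4 (R : realType) (m n : nat) (Smin Smax alpha : R)
  (leR : rel (Omega n m)) :
  (2 <= m)%N -> (1 <= n)%N -> Smin < Smax ->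
  0 <= alpha -> alpha < 1 ->
  total_preorder leR ->
  (forall x : Omega n m, Fset (upper leR x) alpha !=set0) ->
  consistent (Bstar Smin Smax alpha leR) leR.
Proof.
move=> _ _ _ _ _ [_ [trR totR]] Fne leT _ agr x y lexy.
by apply: Bstar_le => //; apply: agrees_le lexy.
Qed.
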